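(* Let $G=(V,E,w)$ be a connected weighted multigraph, let $S\subseteq V$, $x\in S$ and $l\ge0$. Let $V'=V\setminus C_S(l,x)$, $S'=S\setminus C_S(l,x)$ and $\psi=\max_{v\in V}d_G(v,S)$. Then \[ \max_{v\in V'} d_{G(V')}(v,S')\le \psi. \]
   Context: Edge lengths are $d(e)=1/w(e)$; $d_H(u,S)$ is the shortest-path distance in graph $H$ from $u$ to the nearest vertex of $S$, and $G(U)$ is the subgraph induced by $U$. $F(S)=\{(u\to v): (u,v)\in E,\ d_G(u,S)+d(u,v)=d_G(v,S)\}$ is the set of (directed) forward edges induced by $S$. The cone $C_S(l,x)$ is the set of vertices reachable from $x$ by a path in $G$ such that the sum of the lengths of traversed edges that are not traversed as forward edges of $F(S)$ is at most $l$. *)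

From HB Require Import structures.
From mathcomp Require Import all_boot all_order all_algebra.
From mathcomp Require Import all_classical all_reals ereal.
Set Implicit Arguments. Unset Strict Implicit. Unset Printing Implicit Defensive.
Import Order.TTheory GRing.Theory Num.Theory.
Local Open Scope classical_set_scope.
Local Open Scope ring_scope.

(* A weighted multigraph: finite vertex type V, finite edge type E
   (parallel edges allowed), each edge e joins src e and dst e
   (undirected; the orientation is only a naming convention), weight w e > 0.
   Edge length d(e) = 1 / w(e). *)
Section Graph.
Variables (R : realType) (V E : finType) (src dst : E -> V) (w : E -> R).

Definition elen (e : E) : R := 1 / w e.

(* A traversal step (e, b): b = true traverses e from src to dst,
   b = false from dst to src. *)
Definition stail (s : E * bool) : V := if s.2 then src s.1 else dst s.1.
Definition shead (s : E * bool) : V := if s.2 then dst s.1 else src s.1.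

(* walk_in U u p : p is a walk starting at u all of whose vertices lie in U,
   i.e. a walk in the induced subgraph G(U). *)
Fixpoint walk_in (U : set V) (u : V) (p : seq (E * bool)) : Prop :=
  match p with
  | [::] => U u
  | s :: p' => U u /\ stail s = u /\ walk_in U (shead s) p'
  end.

Fixpoint walk_end (u : V) (p : seq (E * bool)) : V :=
  match p with
  | [::] => u
  | s :: p' => walk_end (shead s) p'
  end.

Definition walk_len (p : seq (E * bool)) : R := \sum_(s <- p) elen s.1.

(* d_{G(U)}(u, S): shortest-path distance in G(U) from u to the nearest
   vertex of S (+oo if none is reachable). *)
Definition dist (U S : set V) (u : V) : \bar R :=
  ereal_inf [set (walk_len p)%:E | p in
             [set p | walk_in U u p /\ S (walk_end u p)]].

Definition distG (S : set V) (u : V) : \bar R := dist setT S u.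

Definition graph_connected : Prop :=
  forall u v : V, exists p, walk_in setT u p /\ walk_end u p = v.

(* The step s traverses the edge as a forward edge of F(S):
   d_G(u,S) + d(u,v) = d_G(v,S) where u -> v is the traversal direction. *)
Definition forward_step (S : set V) (s : E * bool) : Prop :=
  (distG S (stail s) + (elen s.1)%:E)%E = distG S (shead s).

Definition cone_cost (S : set V) (p : seq (E * bool)) : R :=
  \sum_(s <- p) (if `[< forward_step S s >] then 0 else elen s.1).

Definition cone (S : set V) (l : R) (x : V) : set V :=
  [set v | exists p, walk_in setT x p /\ walk_end x p = v /\ cone_cost S p <= l].

End Graph.

From HB Require Import structures.
From mathcomp Require Import all_boot all_order all_algebra.
From mathcomp Require Import all_classical all_reals ereal.
Import Order.TTheory GRing.Theory Num.Theory.
Local Open Scope classical_set_scope.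
Local Open Scope ring_scope.
Local Open Scope ereal_scope.

(** Write d for d_G(., S) and C for the cone.  C is closed under forward
    edges: appending a forward edge to a walk costs nothing.  For v outside C
    we show d_{G(V \ C)}(v, S \ C) <= d(v) by induction along d.  If v is in S,
    then v is in S \ C.  Otherwise the first edge v - h of a shortest walk
    satisfies d(h) + d(v,h) = d(v), so h -> v is a forward edge; since v is
    not in C, neither is h, and the induction hypothesis at h, where d is
    smaller, gives the bound at v. *)

Lemma finite_lt_ind {T : finType} {disp : Order.disp_t} {O : porderType disp}
    (f : T -> O) (P : T -> Prop) :
  (forall u, (forall y, (f y < f u)%O -> P y) -> P u) -> forall u, P u.
Proof.
move=> IH u; have [n] := ubnP #|[pred y | (f y < f u)%O]|.
elim: n u => [//|n IHn] u rank_u; apply: IH => y lt_yu; apply: IHn.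
rewrite -ltnS; apply: leq_trans rank_u; rewrite ltnS.
apply: proper_card; apply/properP; split.
  by apply/fintype.subsetP => z; rewrite !inE => /lt_trans; apply.
by exists y; rewrite !inE ?lt_yu // ltxx.
Qed.

Section Distances.
Variables (R : realType) (V E : finType) (src dst : E -> V) (w : E -> R).
Hypothesis w_gt0 : forall e, (0 < w e)%R.

Lemma elen_gt0 e : (0 < elen w e)%R.
Proof. by rewrite /elen divr_gt0. Qed.

Lemma walk_len_cons s p : walk_len w (s :: p) = (elen w s.1 + walk_len w p)%R.
Proof. by rewrite /walk_len big_cons. Qed.

Lemma walk_len_ge0 p : (0 <= walk_len w p)%R.
Proof. by rewrite /walk_len sumr_ge0 // => s _; rewrite ltW ?elen_gt0. Qed.

Lemma dist_ge0 U S u : 0 <= dist src dst w U S u.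
Proof.
by apply: le_ereal_inf_tmp => _ [p _ <-]; rewrite lee_fin walk_len_ge0.
Qed.

Lemma dist_eq0 U S u : U u -> S u -> dist src dst w U S u = 0.
Proof.
move=> Uu Su; apply/eqP; rewrite eq_le dist_ge0 andbT.
by apply: ereal_inf_lbound; exists [::] => //; rewrite /walk_len big_nil.
Qed.

Lemma dist_le_step U S u s : U u -> stail src dst s = u ->
  dist src dst w U S u <= (elen w s.1)%:E + dist src dst w U S (shead src dst s).
Proof.
move=> Uu tl_s; rewrite -leeBlDl //.
apply: le_ereal_inf_tmp => _ [p [Up Sp] <-].
rewrite leeBlDl // -EFinD -walk_len_cons.
by apply: ereal_inf_lbound; exists (s :: p).
Qed.

(* Bellman's equation; the first step is chosen by minimising over the
   finitely many steps leaving u. *)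
Lemma dist_first_step U S u : U u -> ~ S u -> dist src dst w U S u < +oo ->
  exists2 s, stail src dst s = u &
    dist src dst w U S u = (elen w s.1)%:E + dist src dst w U S (shead src dst s).
Proof.
move=> Uu nSu dist_fin.
pose step_from := [pred s : E * bool | stail src dst s == u].
pose via s := (elen w s.1)%:E + dist src dst w U S (shead src dst s).
have [s0 s0_from | no_step] := pickP step_from; last first.
  suff walks0 : [set (walk_len w p)%:E | p in
      [set p | walk_in src dst U u p /\ S (walk_end src dst u p)]] = set0.
    by move: dist_fin; rewrite /dist walks0 ereal_inf0.
  apply/seteqP; split => // _ [[|s p] [walk_p Sp] _] //=.
  by case: walk_p => _ [tl_s _]; move: (no_step s); rewrite /= tl_s eqxx.
case: (arg_minP via s0_from) => s /eqP tl_s via_min.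
exists s => //; apply/eqP; rewrite eq_le dist_le_step //=.
apply: le_ereal_inf_tmp => _ [[|t p] [walk_p Sp] <-]; first by case: nSu.
move: walk_p => /= -[_ [tl_t walk_p]].
apply: le_trans (via_min t _) _; first by rewrite /= tl_t.
rewrite walk_len_cons EFinD leeD2l //.
by apply: ereal_inf_lbound; exists p.
Qed.

Definition forward_closed (S C : set V) : Prop :=
  forall s, C (stail src dst s) -> forward_step src dst w S s -> C (shead src dst s).

Lemma dist_setC_forward_closed (S C : set V) u : forward_closed S C -> ~ C u ->
  dist src dst w (~` C) (S `\` C) u <= distG src dst w S u.
Proof.
move=> C_closed; elim/(finite_lt_ind (distG src dst w S)): u => u IH nCu.
have [->|dist_fin] := eqVneq (distG src dst w S u) +oo; first exact: leey.
rewrite -ltey in dist_fin.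
have [Su|nSu] := pselect (S u); first by rewrite dist_eq0 ?dist_ge0.
have [s tl_s dist_u] : exists2 s, stail src dst s = u &
    distG src dst w S u = (elen w s.1)%:E + distG src dst w S (shead src dst s).
  exact: dist_first_step.
set h := shead src dst s in dist_u.
have lt_hu : distG src dst w S h < distG src dst w S u.
  rewrite dist_u lteDr ?lte_fin ?elen_gt0 //.
  rewrite ge0_fin_numE ?dist_ge0 //; apply: le_lt_trans dist_fin.
  by rewrite dist_u leeDr ?lee_fin ?ltW ?elen_gt0.
have nCh : ~ C h.
  pose back := (s.1, ~~ s.2).
  have tl_back : stail src dst back = h by rewrite /back /h /stail /shead /=; case: s.2.
  have hd_back : shead src dst back = u by rewrite /back -tl_s /stail /shead /=; case: s.2.
  move=> Ch; apply: nCu; rewrite -hd_back; apply: C_closed; rewrite ?tl_back //.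
  by rewrite /forward_step tl_back hd_back dist_u addeC.
apply: le_trans; first exact: dist_le_step nCu tl_s.
by rewrite dist_u leeD2l // IH.
Qed.

Lemma walk_in_rcons U u p s : walk_in src dst U u p ->
  U (shead src dst s) -> stail src dst s = walk_end src dst u p ->
  walk_in src dst U u (rcons p s).
Proof.
elim: p u => [|t p IH] u /=; first by move=> Uu Uhd tl_s; split; last split.
by move=> [Uu [tl_t walk_p]] Uhd end_p; split; last split; last exact: IH.
Qed.

Lemma walk_end_rcons u p s : walk_end src dst u (rcons p s) = shead src dst s.
Proof. by elim: p u => [|t p IH] u //=. Qed.

Lemma cone_cost_rcons S p s : cone_cost src dst w S (rcons p s) =
  (cone_cost src dst w S p +
   if `[< forward_step src dst w S s >] then 0 else elen w s.1)%R.
Proof. by rewrite /cone_cost -cats1 big_cat big_seq1. Qed.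

Lemma cone_forward_closed S l x : forward_closed S (cone src dst w S l x).
Proof.
move=> s [p [walk_p [end_p cost_p]]] fwd_s; exists (rcons p s); split.
  by apply: walk_in_rcons; rewrite ?end_p.
by rewrite walk_end_rcons cone_cost_rcons asboolT // addr0.
Qed.

End Distances.

Theorem mainTheorem8 (R : realType) (V E : finType) (src dst : E -> V)
  (w : E -> R) (hw : forall e, (0 < w e)%R)
  (hconn : graph_connected src dst)
  (S : set V) (x : V) (hx : S x) (l : R) (hl : (0 <= l)%R) :
  let C := cone src dst w S l x in
  let V' := ~` C in
  let S' := S `\` C in
  let psi := \big[Order.max/-oo%E]_(v : V) distG src dst w S v in
  forall v, V' v -> (dist src dst w V' S' v <= psi)%E.
Proof.
move=> C V' S' psi v V'v.
apply: le_trans (le_bigmax _ _ v).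
exact/dist_setC_forward_closed/V'v/cone_forward_closed.
Qed.
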